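(* Let $\beta$ be a Pisot number. Let $[0,1]=\bigcup_{i=1}^{\ell} J_i$ be a finite partition of $[0,1]$ into subintervals, and let $S:[0,1]\to[0,1]$ be given by $$S(x)=\epsilon_i \beta^{m_i} x + b_i \quad\text{for } x\in J_i,$$ where $\epsilon_i\in\{-1,1\}$, $m_i$ is a positive integer and $b_i\in\mathbb{Q}(\beta)$ for $1\le i\le \ell$ (these data are assumed to be such that $S$ maps $[0,1]$ into $[0,1]$). Then for $x\in[0,1]$, the orbit $(S^n(x))_{n\ge 0}$ is eventually periodic if and only if $x\in\mathbb{Q}(\beta)$.
   Context: A Pisot number is a real algebraic integer greater than one all of whose Galois conjugates other than itself have modulus less than one. The subintervals $J_i$ may be closed, open, half-open, or singletons. *)

From HB Require Import structures.
From mathcomp Require Import all_boot all_order all_algebra.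
From mathcomp Require Import reals.
From mathcomp.real_closed Require Import complex.
Set Implicit Arguments. Unset Strict Implicit. Unset Printing Implicit Defensive.
Import Order.TTheory GRing.Theory Num.Theory.
Local Open Scope ring_scope.

(* beta is a Pisot number: a real algebraic integer > 1 (root of a monic integer
   polynomial that is irreducible over Q, i.e. its minimal polynomial) all of
   whose Galois conjugates other than beta (the other complex roots of that
   polynomial) have modulus < 1. *)
Definition pisot (R : realType) (beta : R) : Prop :=
  exists p : {poly int},
    [/\ p \is monic,
        irreducible_poly (map_poly intr p : {poly rat}),
        root (map_poly intr p : {poly R}) beta,
        1 < beta &
        forall z : complex R, root (map_poly intr p) z -> z != (beta%:C)%C ->
          `|z| < 1].

Definition in_Qbeta (R : realType) (beta x : R) : Prop :=
  exists p q : {poly rat},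
    (map_poly ratr q).[beta] != 0 /\
    x = (map_poly ratr p).[beta] / (map_poly ratr q).[beta].

Definition eventually_periodic (T : Type) (S : T -> T) (x : T) : Prop :=
  exists N p : nat, (0 < p)%N /\ iter (N + p) S x = iter N S x.

(* On [0, 1] every iterate of S is affine, y |-> a * y + c, with a and c in Q(beta) and
   |a| a product of powers of beta, hence > 1.  A periodic point y = a * y + c is thus
   c / (1 - a), and pulling it back along the invertible branches puts x in Q(beta).
   Conversely, pick D so that D * x and every D * b_i lie in Z[beta].  Then
   D * S^n(x) = V_n(beta) for integer polynomials with V_(n+1) = +-X^(m_i) V_n + B_i.
   At a conjugate z of beta, |z| < 1 turns this recursion into a contraction, so the
   V_n(z) stay bounded, as does V_n(beta) = D * S^n(x).  Reduced modulo the minimal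
   polynomial, the V_n are thus bounded at all of its (distinct) roots; inverting the
   Vandermonde matrix of these roots bounds their integer coefficients, so they take
   finitely many values and the orbit repeats. *)

From HB Require Import structures.
From mathcomp Require Import all_boot all_order all_algebra separable.
From mathcomp Require Import boolp reals.
From mathcomp.real_closed Require Import complex.
From mathcomp.real_closed Require polyorder.
From mathcomp Require Import ring zify.
Set Implicit Arguments. Unset Strict Implicit. Unset Printing Implicit Defensive.
Import Order.TTheory GRing.Theory Num.Theory.
Local Open Scope ring_scope.
Local Open Scope complex_scope.

Section ExpandingAffineOrbit.
Variables (F : numFieldType) (K : divringClosed F) (D : {pred F}) (S : F -> F).
Hypothesis S_maps : {homo S : y / y \in D}.
Hypothesis S_expanding_affine : {in D, forall y,
  exists a c, [/\ a \in K, c \in K, 1 < `|a| & S y = a * y + c]}.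

Lemma iter_expanding_affine n y : y \in D ->
  exists a c, [/\ a \in K, c \in K, 1 < `|a| & iter n.+1 S y = a * y + c].
Proof.
move=> yD; elim: n => [|n [a [c [aK cK a_gt1 Sy]]]]; first exact: S_expanding_affine.
have [a' [c' [a'K c'K a'_gt1 Sz]]] := S_expanding_affine (iter_in n.+1 S_maps yD).
rewrite iterS Sz Sy.
exists (a' * a), (a' * c + c'); split; rewrite ?rpredD ?rpredM //.
  by rewrite normrM mulr_egt1.
by rewrite mulrDr mulrA addrA.
Qed.

Lemma mem_of_iter_mem n y : y \in D -> iter n S y \in K -> y \in K.
Proof.
elim: n y => [//|n IH] y yD; rewrite iterSr => /(IH _ (S_maps yD)).
have [a [c [aK cK a_gt1 ->]]] := S_expanding_affine yD.
have a_neq0 : a != 0 by rewrite -normr_gt0 (lt_trans ltr01).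
by move=> Sy_K; rewrite -(mulKf a_neq0 y) -(addrK c (a * y)) rpredM ?rpredV ?rpredB.
Qed.

Lemma eventually_periodic_mem x : x \in D -> eventually_periodic S x -> x \in K.
Proof.
move=> xD [N [k [k_gt0]]]; case: k k_gt0 => // k _; rewrite addnC iterD; set y := iter N S x.
have yD : y \in D by exact: iter_in.
have [a [c [aK cK a_gt1 ->]]] := iter_expanding_affine k yD.
have a_neq1 : 1 - a != 0 by rewrite subr_eq0; apply: contraTneq a_gt1 => <-; rewrite normr1 ltxx.
move=> y_fix; apply: (@mem_of_iter_mem N _ xD); rewrite -/y.
have -> : y = c / (1 - a) by apply: (canRL (mulfK a_neq1)); rewrite mulrBr mulr1 -{1}y_fix; ring.
by rewrite rpred_div ?rpredB ?rpred1.
Qed.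

End ExpandingAffineOrbit.

Definition int_horner (T : comNzRingType) (A : {poly int}) (z : T) := (map_poly intr A).[z].

Lemma map_ratr_intr (T : numFieldType) (p : {poly int}) :
  map_poly (ratr : rat -> T) (map_poly intr p) = map_poly intr p.
Proof. by rewrite -map_poly_comp; apply: eq_map_poly => z /=; exact: ratr_int. Qed.

Lemma normc_real (R : rcfType) (r : R) : `|r%:C| = `|r|%:C.
Proof.
have [r_ge0|r_lt0] := lerP 0 r; first by rewrite !ger0_norm ?lecR.
by rewrite !ltr0_norm ?ltcR // rmorphN.
Qed.

Lemma int_horner_real_complex (R : rcfType) (A : {poly int}) (x : R) :
  int_horner A x%:C = (int_horner A x)%:C.
Proof.
rewrite /int_horner -horner_map /= -map_poly_comp.
by congr (_.[_]); apply: eq_map_poly => z /=; rewrite rmorph_int.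
Qed.

Lemma int_horner_scale_XnM_add (T : comNzRingType) (e : int) k (V B : {poly int}) (z : T) :
  int_horner (e *: ('X^k * V) + B) z = e%:~R * (z ^+ k * int_horner V z) + int_horner B z.
Proof.
by rewrite /int_horner rmorphD /= map_polyZ rmorphM /= map_polyXn hornerD hornerZ hornerM hornerXn.
Qed.

Lemma int_horner_modp (T : comNzRingType) (A p : {poly int}) (z : T) :
  p \is monic -> root (map_poly intr p) z -> int_horner (A %% p) z = int_horner A z.
Proof.
move=> p_monic /rootP p_z; have := Pdiv.Idomain.divp_eq A p.
rewrite (monicP p_monic) expr1n scale1r => A_def.
by rewrite [in RHS]A_def /int_horner rmorphD rmorphM /= hornerD hornerM p_z mulr0 add0r.
Qed.

Definition Qbeta (R : realType) (beta : R) : {pred R} := fun x => `[< in_Qbeta beta x >].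

Section QbetaField.
Variables (R : realType) (beta : R).
Local Notation ratev P := (map_poly (ratr : rat -> R) P).[beta].

Fact Qbeta_divring_closed : divring_closed (Qbeta beta).
Proof.
split.
- by apply/asboolP; exists 1, 1; rewrite rmorph1 hornerC oner_eq0 divr1.
- move=> _ _ /asboolP[P [Q [Q_neq0 ->]]] /asboolP[P' [Q' [Q'_neq0 ->]]].
  apply/asboolP; exists (P * Q' - P' * Q), (Q * Q').
  rewrite !(rmorphB, rmorphM) !(hornerD, hornerN, hornerM) mulf_neq0 //.
  by split=> //; field; apply/andP.
- move=> _ y /asboolP[P [Q [Q_neq0 ->]]] /asboolP[P' [Q' [Q'_neq0 y_def]]].
  have [->|y_neq0] := eqVneq y 0.
    apply/asboolP; exists 0, 1.
    by rewrite invr0 mulr0 rmorph0 rmorph1 horner0 hornerC mul0r oner_eq0.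
  have P'_neq0 : ratev P' != 0 by apply: contra_neq y_neq0; rewrite y_def => ->; rewrite mul0r.
  apply/asboolP; exists (P * Q'), (Q * P'); rewrite y_def !rmorphM !hornerM mulf_neq0 //.
  by split=> //; field; rewrite P'_neq0 Q_neq0 Q'_neq0.
Qed.

HB.instance Definition _ := GRing.isDivringClosed.Build R (Qbeta beta) Qbeta_divring_closed.

Lemma Qbeta_beta : beta \in Qbeta beta.
Proof.
by apply/asboolP; exists 'X, 1; rewrite rmorph1 map_polyX hornerX hornerC oner_eq0 divr1.
Qed.

Section MinimalPolynomial.
Variable p : {poly int}.
Hypotheses (p_irr : irreducible_poly (map_poly intr p : {poly rat}))
  (p_beta : root (map_poly intr p) beta).

Lemma Qbeta_rat_poly x : x \in Qbeta beta -> exists P : {poly rat}, x = ratev P.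
Proof.
move=> /asboolP[P [Q [Q_neq0 ->]]].
have p_root : ratev (map_poly intr p) = 0 by rewrite map_ratr_intr; exact/rootP.
have : coprimep (map_poly intr p) Q.
  rewrite irreducible_poly_coprime //; apply: contra Q_neq0 => /dvdpP[r ->].
  by rewrite rmorphM hornerM p_root mulr0.
case/Bezout_eq1_coprimepP=> [[u v] /= /(congr1 (fun P => ratev P))].
rewrite rmorphD !rmorphM /= hornerD !hornerM p_root mulr0 add0r rmorph1 hornerC.
move=> vQ1; exists (P * v); rewrite rmorphM hornerM; congr (_ * _).
by apply: (mulIf Q_neq0); rewrite mulVf.
Qed.

Lemma Qbeta_int_horner x : x \in Qbeta beta ->
  exists (a : int) (A : {poly int}), a != 0 /\ a%:~R * x = int_horner A beta.
Proof.
case/Qbeta_rat_poly=> P ->; have [A [a a_neq0 ->]] := rat_poly_scale P.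
exists a, A; split=> //.
by rewrite map_polyZ hornerZ map_ratr_intr fmorphV rmorph_int mulVKf ?intr_eq0.
Qed.

Lemma Qbeta_common_denominator (I : finType) (u : I -> R) :
  (forall i, u i \in Qbeta beta) ->
  exists D : int, D != 0 /\ forall i, exists A, D%:~R * u i = int_horner A beta.
Proof.
move=> uQ; have [a aA] := fin_all_exists (fun i => Qbeta_int_horner (uQ i)).
have [A aA_def] := fin_all_exists aA.
exists (\prod_i a i); split; first by apply/prodf_neq0 => i _; case: (aA_def i).
move=> i; exists ((\prod_(j | j != i) a j) *: A i).
rewrite (bigD1 i) //= intrM mulrAC (aA_def i).2 mulrC.
by rewrite /int_horner map_polyZ hornerZ.
Qed.

End MinimalPolynomial.
End QbetaField.

Lemma finite_range_repeat (T : eqType) (s : seq T) (f : nat -> T) :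
  (forall n, f n \in s) -> exists i j, (i < j)%N /\ f i = f j.
Proof.
move=> f_s; have : ~~ uniq (mkseq f (size s).+1).
  apply/negP => f_uniq; suff : (size (mkseq f (size s).+1) <= size s)%N.
    by rewrite size_mkseq ltnn.
  by apply: uniq_leq_size => // _ /mapP[n _ ->].
case/(uniqPn (f 0)) => i [j [ij]]; rewrite size_mkseq => j_lt.
by rewrite !nth_mkseq ?(ltn_trans ij) // => fij; exists i, j.
Qed.

Fixpoint int_polys_in_box (N d : nat) : seq {poly int} :=
  if d is d'.+1 then
    [seq c%:P + q * 'X | c <- [seq k%:Z - N%:Z | k <- iota 0 (N + N).+1],
                         q <- int_polys_in_box N d']
  else [:: 0].

Lemma mem_int_polys_in_box N d (A : {poly int}) :
  (size A <= d)%N -> (forall k, `|A`_k| <= N%:Z) -> A \in int_polys_in_box N d.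
Proof.
elim: d A => [|d IH] A A_size A_bound.
  by move: A_size; rewrite leqn0 size_poly_eq0 => /eqP->; rewrite mem_seq1.
have -> : A = (A`_0)%:P + drop_poly 1 A * 'X.
  rewrite -[LHS](poly_take_drop 1) expr1; congr (_ + _).
  by apply/polyP => k; rewrite coef_take_poly coefC; case: k.
apply: (allpairs_f (fun c q => c%:P + q * 'X)); last first.
  apply: IH => [|k]; last by rewrite coef_drop_poly.
  by rewrite size_drop_poly leq_subLR.
have := A_bound 0%N; rewrite ler_norml => /andP[A0_ge A0_le].
apply/mapP; exists (absz (A`_0 + N%:Z)); first by rewrite mem_iota; lia.
lia.
Qed.

Lemma Vandermonde_uniq_unitmx (F : fieldType) (rs : seq F) :
  uniq rs -> Vandermonde (size rs) (\row_j rs`_j) \in unitmx.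
Proof.
move=> rs_uniq; rewrite unitmxE unitfE det_Vandermonde.
apply/prodf_neq0 => i _; apply/prodf_neq0 => j ij.
by rewrite !mxE subr_eq0 nth_uniq // gtn_eqF.
Qed.

Lemma complex_ge0_nat_bound (R : realType) (K : complex R) :
  0 <= K -> exists N : nat, K <= N%:R.
Proof.
move=> K_ge0; have K_real := RRe_real (ger0_real K_ge0).
have ReK_ge0 : 0 <= complex.Re K by rewrite -lecR K_real.
exists (Num.Def.archi_bound (complex.Re K)).
rewrite -K_real -(rmorph_nat (real_complex R)) lecR.
exact: ltW (archi_boundP ReK_ge0).
Qed.

Lemma int_poly_coef_bound (R : realType) (rs : seq (complex R)) (M : complex R) :
  uniq rs -> 0 <= M -> exists N : nat, forall A : {poly int},
  (size A <= size rs)%N -> (forall z, z \in rs -> `|int_horner A z| <= M) ->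
  forall k, `|A`_k| <= N%:Z.
Proof.
move=> rs_uniq M_ge0; set d := size rs.
pose W := invmx (Vandermonde d (\row_j rs`_j)).
pose K := M * \sum_(k < d) \sum_(j < d) `|W j k|.
have [|N K_le_N] := @complex_ge0_nat_bound R K.
  by rewrite mulr_ge0 //; do 2 apply: sumr_ge0 => ? _.
exists N => A A_size A_bound k.
have [k_lt|k_ge] := ltnP k d; last by rewrite (leq_sizeP _ _ A_size k k_ge) normr0.
pose c : 'rV[complex R]_d := \row_i (A`_i)%:~R.
have c_def : c = (\row_j int_horner A rs`_j) *m W.
  rewrite -[c]mulmx1 -(mulmxV (Vandermonde_uniq_unitmx rs_uniq)) mulmxA; congr (_ *m _).
  apply/rowP => j; rewrite !mxE /int_horner (@horner_coef_wide _ d).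
    by apply: eq_bigr => i _; rewrite !mxE coef_map.
  by apply/leq_sizeP => i i_ge; rewrite coef_map (leq_sizeP _ _ A_size i i_ge).
suff : `|(A`_k)%:~R : complex R| <= K.
  by rewrite -intr_norm => /le_trans/(_ K_le_N); rewrite -(ler_int (complex R)).
have -> : (A`_k)%:~R = c 0 (Ordinal k_lt) by rewrite mxE.
rewrite c_def mxE; apply: (le_trans (ler_norm_sum _ _ _)).
apply: (@le_trans _ _ (M * \sum_(j < d) `|W j (Ordinal k_lt)|)).
  rewrite mulr_sumr; apply: ler_sum => j _; rewrite mxE normrM.
  by apply: ler_wpM2r => //; apply: A_bound; rewrite mem_nth.
rewrite ler_wpM2l // [leRHS](bigD1 (Ordinal k_lt)) //= lerDl.
by apply: sumr_ge0 => i _; apply: sumr_ge0.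
Qed.

Lemma irreducible_rat_separable (q : {poly rat}) : irreducible_poly q -> separable_poly q.
Proof.
move=> q_irr; have q_size := q_irr.1.
rewrite unlock /separable_poly irreducible_poly_coprime //; apply/negP => q_dvd.
have size_q' : size q^`() = (size q).-1 by apply: polyorder.size_deriv.
have q'_neq0 : q^`() != 0 by rewrite -size_poly_eq0 size_q'; case: (size q) q_size => [|[]].
by have := dvdp_leq q'_neq0 q_dvd; rewrite size_q'; case: (size q) q_size => //= n _; rewrite ltnn.
Qed.

Lemma int_poly_complex_roots (R : rcfType) (p : {poly int}) :
  p \is monic -> irreducible_poly (map_poly intr p : {poly rat}) ->
  exists rs : seq (complex R), uniq rs /\ map_poly intr p = \prod_(z <- rs) ('X - z%:P).
Proof.
move=> p_monic p_irr.
have [rs p_split] := closed_field_poly_normal (map_poly intr p : {poly complex R}).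
rewrite (monicP (monic_map _ p_monic)) scale1r in p_split.
exists rs; split=> //; rewrite -separable_prod_XsubC -p_split.
by rewrite -(map_ratr_intr (complex R)) separable_map irreducible_rat_separable.
Qed.

Section PisotConjugates.
Variables (R : realType) (beta : R) (p : {poly int}).
Hypotheses (p_monic : p \is monic)
  (p_irr : irreducible_poly (map_poly intr p : {poly rat}))
  (p_beta : root (map_poly intr p) beta).

Lemma repeat_of_bounded_conjugates (y : nat -> R) (B : R) (M : complex R -> complex R) :
  (forall n, `|y n| <= B) ->
  (forall n, exists V : {poly int}, y n = int_horner V beta /\
     forall z, root (map_poly intr p) z -> z != beta%:C -> `|int_horner V z| <= M z) ->
  exists i j, (i < j)%N /\ y i = y j.
Proof.
move=> y_bound y_poly; have [rs [rs_uniq p_split]] := int_poly_complex_roots R p_monic p_irr.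
have rs_root z : z \in rs -> root (map_poly intr p) z by rewrite p_split root_prod_XsubC.
pose Mb z := if z == beta%:C then B%:C else M z.
have Mb_ge0 z : z \in rs -> 0 <= Mb z.
  have [V0 [_ V0_bound]] := y_poly 0%N.
  rewrite /Mb; case: eqP => [_ _|/eqP z_neq z_rs].
    by rewrite lecR (le_trans _ (y_bound 0%N)).
  exact: le_trans (V0_bound z (rs_root z z_rs) z_neq).
pose Mall := \sum_(z <- rs) Mb z.
have Mb_le z : z \in rs -> Mb z <= Mall.
  move=> z_rs; rewrite /Mall (bigD1_seq z) //= lerDl big_seq_cond.
  by apply: sumr_ge0 => w /andP[w_rs _]; apply: Mb_ge0.
have [|N N_bound] := int_poly_coef_bound rs_uniq (M := Mall).
  by rewrite /Mall big_seq; apply: sumr_ge0 => z; apply: Mb_ge0.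
have size_p : size p = (size rs).+1.
  rewrite -(size_map_inj_poly (@intr_inj (complex R))) ?rmorph0 //.
  by rewrite p_split size_prod_XsubC.
apply: (@finite_range_repeat _ [seq int_horner A beta | A <- int_polys_in_box N (size rs)]).
move=> n; have [V [yn_def V_bound]] := y_poly n.
rewrite yn_def -(int_horner_modp V p_monic p_beta); apply: map_f; apply: mem_int_polys_in_box.
  by rewrite -ltnS -size_p ltn_modp monic_neq0.
apply: N_bound => [|z z_rs]; first by rewrite -ltnS -size_p ltn_modp monic_neq0.
rewrite int_horner_modp ?rs_root //; apply: le_trans (Mb_le z z_rs); rewrite /Mb.
case: eqP => [->|/eqP z_neq]; last exact: V_bound z (rs_root z z_rs) z_neq.
by rewrite int_horner_real_complex normc_real lecR -yn_def.
Qed.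

End PisotConjugates.

Lemma affine_contraction_le (F : numFieldType) (r a c u : F) :
  0 <= r -> r < 1 -> 0 <= a -> u <= a + c / (1 - r) -> r * u + c <= a + c / (1 - r).
Proof.
move=> r_ge0 r_lt1 a_ge0 u_le; have r_neq1 : 1 - r != 0 by rewrite subr_eq0 eq_sym lt_eqF.
apply: le_trans (_ : r * (a + c / (1 - r)) + c <= _); first by rewrite lerD2r ler_wpM2l.
rewrite -subr_ge0 (_ : _ - _ = (1 - r) * a); last by field.
by rewrite mulr_ge0 // subr_ge0 ltW.
Qed.

Section PiecewiseAffineMap.
Variables (R : realType) (beta : R) (l : nat) (J : 'I_l -> interval R)
  (eps : 'I_l -> R) (m : 'I_l -> nat) (b : 'I_l -> R) (S : R -> R).
Hypotheses (J_cover : forall x, x \in `[0, 1] -> exists i, x \in J i)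
  (eps_sign : forall i, eps i = 1 \/ eps i = -1) (m_gt0 : forall i, (0 < m i)%N)
  (S_piece : forall i x, x \in J i -> S x = eps i * beta ^+ m i * x + b i)
  (S_maps : forall x, x \in `[0, 1] -> S x \in `[0, 1])
  (beta_gt1 : 1 < beta) (b_Qbeta : forall i, b i \in Qbeta beta).

Lemma eventually_periodic_Qbeta x :
  x \in `[0, 1] -> eventually_periodic S x -> x \in Qbeta beta.
Proof.
apply: (@eventually_periodic_mem _ _ [pred y | y \in `[0, 1]]) => // y /J_cover[i y_i].
exists (eps i * beta ^+ m i), (b i); rewrite (S_piece y_i).
have eps_Q : eps i \in Qbeta beta by case: (eps_sign i) => ->; rewrite ?rpredN rpred1.
have eps_norm : `|eps i| = 1 by case: (eps_sign i) => ->; rewrite ?normrN normr1.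
split=> //; first by rewrite rpredM ?rpredX ?Qbeta_beta.
by rewrite normrM eps_norm mul1r normrX gtr0_norm ?(lt_trans ltr01) // exprn_egt1 // -lt0n m_gt0.
Qed.

Lemma orbit_int_horner_bound (D : int) (A : {poly int}) (B : 'I_l -> {poly int}) x :
  x \in `[0, 1] -> D%:~R * x = int_horner A beta ->
  (forall i, D%:~R * b i = int_horner (B i) beta) ->
  forall n, exists V : {poly int}, D%:~R * iter n S x = int_horner V beta /\
    forall z : complex R, `|z| < 1 ->
      `|int_horner V z| <= `|int_horner A z| + (\sum_i `|int_horner (B i) z|) / (1 - `|z|).
Proof.
move=> x01 A_beta B_beta; elim=> [|n [V [V_beta V_bound]]].
  exists A; split=> // z z_lt1; rewrite lerDl divr_ge0 ?subr_ge0 ?(ltW z_lt1) //.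
  exact: sumr_ge0.
have [i yi] := J_cover (iter_in n S_maps x01).
have [e [eps_e e_norm]] : exists e : int, eps i = e%:~R /\ `|e| = 1.
  by case: (eps_sign i) => ->; [exists 1 | exists (-1)].
exists (e *: ('X^(m i) * V) + B i); split.
  by rewrite int_horner_scale_XnM_add iterS (S_piece yi) -V_beta -B_beta eps_e; ring.
move=> z z_lt1; rewrite int_horner_scale_XnM_add; apply: le_trans (ler_normD _ _) _.
rewrite !normrM -intr_norm e_norm mul1r normrX.
apply: le_trans (affine_contraction_le _ z_lt1 _ (V_bound z z_lt1)) => //.
apply: lerD; last by rewrite (bigD1 i) //= lerDl; apply: sumr_ge0.
rewrite ler_wpM2r //; case: (m i) (m_gt0 i) => // k _.
by rewrite exprS ler_piMr // exprn_ile1 // ltW.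
Qed.

Variable p : {poly int}.
Hypotheses (p_monic : p \is monic)
  (p_irr : irreducible_poly (map_poly intr p : {poly rat}))
  (p_beta : root (map_poly intr p) beta)
  (conj_small : forall z : complex R, root (map_poly intr p) z -> z != beta%:C -> `|z| < 1).

Lemma Qbeta_eventually_periodic x :
  x \in `[0, 1] -> x \in Qbeta beta -> eventually_periodic S x.
Proof.
move=> x01 x_Q; pose u (o : option 'I_l) := if o is Some i then b i else x.
have [D [D_neq0 Du_poly]] := Qbeta_common_denominator p_irr p_beta (u := u)
  (fun o => if o is Some i then b_Qbeta i else x_Q).
have [A A_beta] := Du_poly None; have [B B_beta] := fin_all_exists (fun i => Du_poly (Some i)).
have Dy_bound n : `|D%:~R * iter n S x| <= `|D%:~R|.
  have := iter_in n S_maps x01; rewrite in_itv /= => /andP[y_ge0 y_le1].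
  by rewrite normrM ler_piMr // ger0_norm.
pose conj_bound (z : complex R) :=
  `|int_horner A z| + (\sum_i `|int_horner (B i) z|) / (1 - `|z|).
have Dy_poly n : exists V : {poly int}, D%:~R * iter n S x = int_horner V beta /\
    forall z, root (map_poly intr p) z -> z != beta%:C -> `|int_horner V z| <= conj_bound z.
  have [V [V_beta V_bound]] := orbit_int_horner_bound x01 A_beta B_beta n.
  by exists V; split=> // z z_root z_neq; apply: V_bound; apply: conj_small.
have [i [j [ij Dy_ij]]] := repeat_of_bounded_conjugates p_monic p_irr p_beta Dy_bound Dy_poly.
exists i, (j - i)%N; rewrite subn_gt0 subnKC ?(ltnW ij) //; split=> //.
by apply: (mulfI (_ : D%:~R != 0 :> R)); rewrite ?intr_eq0.
Qed.

End PiecewiseAffineMap.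

Theorem theorem3p2 (R : realType) (beta : R) (l : nat)
  (J : 'I_l -> interval R) (eps : 'I_l -> R) (m : 'I_l -> nat)
  (b : 'I_l -> R) (S : R -> R) :
  pisot beta ->
  (* the J_i are subintervals forming a partition of [0,1] *)
  (forall i x, x \in J i -> x \in `[0, 1]) ->
  (forall x, x \in `[0, 1] -> exists i, x \in J i) ->
  (forall i j x, x \in J i -> x \in J j -> i = j) ->
  (forall i, eps i = 1 \/ eps i = -1) ->
  (forall i, (0 < m i)%N) ->
  (forall i, in_Qbeta beta (b i)) ->
  (forall i x, x \in J i -> S x = eps i * beta ^+ m i * x + b i) ->
  (forall x, x \in `[0, 1] -> S x \in `[0, 1]) ->
  forall x, x \in `[(0 : R), 1] ->
    (eventually_periodic S x <-> in_Qbeta beta x).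
Proof.
move=> [p [p_monic p_irr p_beta beta_gt1 conj_small]] _ J_cover _ eps_sign m_gt0 b_Q
  S_piece S_maps x x01.
have b_Qbeta i : b i \in Qbeta beta by apply/asboolP.
split=> [x_per|/asboolP x_Q].
  apply/asboolP.
  exact: (eventually_periodic_Qbeta J_cover eps_sign m_gt0 S_piece S_maps beta_gt1 b_Qbeta
    x01 x_per).
exact: (Qbeta_eventually_periodic J_cover eps_sign m_gt0 S_piece S_maps b_Qbeta
  p_monic p_irr p_beta conj_small x01 x_Q).
Qed.
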